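(* Let $A\in\mathbb{C}^{n\times n}$ with $k=\mathrm{Ind}(A)$, and let $m\in\mathbb{N}=\{1,2,\dots\}$. Then: (a) $A^{\#_m}=0$ if and only if $A^k=0$; (b) $A^{\#_m}=A$ if and only if $A$ is an EP tripotent matrix; (c) $A^{\#_m}=A^*$ if and only if $A$ is an EP partial isometry; (d) $A^{\#_m}=P_A$ if and only if $A$ is idempotent.
   Context: For $A\in\mathbb{C}^{n\times n}$: $A^*$ conjugate transpose, $A^\dagger$ Moore–Penrose inverse, $P_A=AA^\dagger$, $\mathcal{R}(\cdot)$ column space, $A^0=I_n$. $A$ is EP if $\mathcal{R}(A)=\mathcal{R}(A^* )$; tripotent if $A^3=A$; a partial isometry if $AA^*A=A$. The index $\mathrm{Ind}(A)$ is the smallest nonnegative integer $k$ with $\mathcal{R}(A^k)=\mathcal{R}(A^{k+1})$. The core-EP inverse $A^{\mathrm{cEP}}$ is the unique $X$ with $XAX=X$ and $\mathcal{R}(X)=\mathcal{R}(X^* )=\mathcal{R}(A^k)$. For $m\in\mathbb{N}$, the $m$-weak group inverse is $A^{\mathrm{WG}_m}:=(A^{\mathrm{cEP}})^{m+1}A^m$ and the $m$-weak core inverse is $A^{\#_m}:=A^{\mathrm{WG}_m}P_{A^m}$. *)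

(* Complex matrices are modelled over an arbitrary
   numClosedFieldType C (e.g. the complex numbers), with the conjugation Num.conj. *)
From HB Require Import structures.
From mathcomp Require Import all_boot all_order all_algebra.
From Stdlib Require Import ClassicalEpsilon.
Set Implicit Arguments. Unset Strict Implicit. Unset Printing Implicit Defensive.
Import Order.TTheory GRing.Theory Num.Theory.
Local Open Scope ring_scope.

Section Defs.
Variable C : numClosedFieldType.

Definition ctrmx (m n : nat) (A : 'M[C]_(m, n)) : 'M[C]_(n, m) :=
  map_mx Num.conj (A^T).

Definition colspace_eq (m n p : nat) (A : 'M[C]_(m, n)) (B : 'M[C]_(m, p)) : bool :=
  (A^T == B^T)%MS.

Definition is_mpinv (m n : nat) (A : 'M[C]_(m, n)) (X : 'M[C]_(n, m)) : Prop :=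
  [/\ A *m X *m A = A, X *m A *m X = X,
      ctrmx (A *m X) = A *m X & ctrmx (X *m A) = X *m A].

Definition mpinv (m n : nat) (A : 'M[C]_(m, n)) : 'M[C]_(n, m) :=
  epsilon (inhabits 0) (is_mpinv A).

Definition projP (m n : nat) (A : 'M[C]_(m, n)) : 'M[C]_m := A *m mpinv A.

Definition index_prop (n : nat) (A : 'M[C]_n) (k : nat) : bool :=
  colspace_eq (A ^+ k) (A ^+ k.+1).

Definition mxindex (n : nat) (A : 'M[C]_n) : nat :=
  match excluded_middle_informative (exists k, index_prop A k) with
  | left h => ex_minn h
  | right _ => 0%N
  end.

Definition is_EP (n : nat) (A : 'M[C]_n) : Prop := colspace_eq A (ctrmx A).
Definition tripotent (n : nat) (A : 'M[C]_n) : Prop := A ^+ 3 = A.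
Definition partial_isometry (n : nat) (A : 'M[C]_n) : Prop := A *m ctrmx A *m A = A.
Definition idempotent_mx (n : nat) (A : 'M[C]_n) : Prop := A *m A = A.

Definition is_coreEP (n : nat) (A X : 'M[C]_n) : Prop :=
  [/\ X *m A *m X = X,
      colspace_eq X (A ^+ mxindex A) &
      colspace_eq (ctrmx X) (A ^+ mxindex A)].

Definition coreEP (n : nat) (A : 'M[C]_n) : 'M[C]_n :=
  epsilon (inhabits 0) (is_coreEP A).

Definition mWG (n : nat) (A : 'M[C]_n) (m : nat) : 'M[C]_n :=
  coreEP A ^+ m.+1 *m A ^+ m.

Definition mWC (n : nat) (A : 'M[C]_n) (m : nat) : 'M[C]_n :=
  mWG A m *m projP (A ^+ m).

End Defs.

From HB Require Import structures.
From mathcomp Require Import all_boot all_order all_algebra.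
From Stdlib Require Import ClassicalEpsilon Classical.
Set Implicit Arguments. Unset Strict Implicit. Unset Printing Implicit Defensive.
Import Order.TTheory GRing.Theory Num.Theory.
Local Open Scope ring_scope.

(* Let X be the core-EP inverse of A and k = Ind(A). Then X A^(l+1) = A^l for
   l >= k, A X is the orthogonal projector onto R(A^k), and R(A^#m) lies in
   R(A^k). Each of the equations A^#m = A, A^*, P_A therefore puts R(A) inside
   R(A^k) (for A^* because R(A) = R(A A^* )), which forces k <= 1. Then
   R(A^m) = R(A), so P_(A^m) = P_A = A X and A^#m collapses to X, and the
   identities X A X = X and X A^2 = A turn each equation into the stated
   property of A. For (a), A^#m A^(m+k) = A^(m-1+k), and A^k lies in
   R(A^(m-1+k)). *)

Section ConjugateTranspose.
Variable C : numClosedFieldType.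

Lemma ctrmxM (p q r : nat) (A : 'M[C]_(p, q)) (B : 'M[C]_(q, r)) :
  ctrmx (A *m B) = ctrmx B *m ctrmx A.
Proof. by rewrite /ctrmx trmx_mul map_mxM. Qed.

Lemma ctrmxK (p q : nat) : cancel (@ctrmx C p q) (@ctrmx C q p).
Proof. by move=> A; apply/matrixP => i j; rewrite /ctrmx !mxE conjCK. Qed.

Lemma ctrmx_inj (p q : nat) : injective (@ctrmx C p q).
Proof. exact: can_inj (@ctrmxK p q). Qed.

Lemma ctrmx_mulmx_eq0 (p q : nat) (A : 'M[C]_(p, q)) : ctrmx A *m A = 0 -> A = 0.
Proof.
move=> AsA0; apply/matrixP => i j; rewrite mxE.
have := congr1 (fun M : 'M[C]_q => M j j) AsA0; rewrite !mxE => sum0.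
have ge0 (l : 'I_p) : true -> 0 <= ctrmx A j l * A l j.
  by move=> _; rewrite /ctrmx !mxE -normCKC exprn_ge0.
have /eqP := psumr_eq0P ge0 sum0 (i := i) isT.
by rewrite /ctrmx !mxE -normCKC sqrf_eq0 normr_eq0 => /eqP.
Qed.

Lemma ctrmx_mulmxKl (p q r : nat) (A : 'M[C]_(p, q)) (Y Z : 'M[C]_(q, r)) :
  ctrmx A *m A *m Y = ctrmx A *m A *m Z -> A *m Y = A *m Z.
Proof.
move=> eqYZ; apply/eqP; rewrite -subr_eq0 -mulmxBr; apply/eqP/ctrmx_mulmx_eq0.
by rewrite ctrmxM -!mulmxA (mulmxA (ctrmx A)) mulmxBr eqYZ subrr mulmx0.
Qed.

Lemma ctrmx_mulmxKr (p q r : nat) (A : 'M[C]_(q, p)) (Y Z : 'M[C]_(r, q)) :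
  Y *m A *m ctrmx A = Z *m A *m ctrmx A -> Y *m A = Z *m A.
Proof.
move=> eqYZ; apply: ctrmx_inj; rewrite !ctrmxM.
apply: (@ctrmx_mulmxKl _ _ _ (ctrmx A)); rewrite ctrmxK.
by have := congr1 (@ctrmx _ _ _) eqYZ; rewrite !ctrmxM ctrmxK !mulmxA.
Qed.

(* [E = E E^*], hence [E] is self-adjoint. *)
Lemma selfadj_of_fix_l (p q : nat) (E : 'M[C]_p) (K Y : 'M[C]_(p, q)) :
  E = Y *m ctrmx K -> E *m K = K -> ctrmx E = E.
Proof.
move=> defE EK; have EEs : E *m ctrmx E = E by rewrite {1}defE -mulmxA -ctrmxM EK.
by rewrite -EEs ctrmxM ctrmxK.
Qed.

Lemma selfadj_of_fix_r (p q : nat) (E : 'M[C]_p) (K Y : 'M[C]_(q, p)) :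
  E = ctrmx K *m Y -> K *m E = K -> ctrmx E = E.
Proof.
move=> defE KE; have EsE : ctrmx E *m E = E by rewrite {2}defE mulmxA -ctrmxM KE.
by rewrite -EsE ctrmxM ctrmxK.
Qed.

End ConjugateTranspose.

Section MoorePenrose.
Variable C : numClosedFieldType.

(* [G := A^* T^- A^*] with [T := A^* A A^*] is a {1,3,4}-inverse of [A], and
   then [G A G] satisfies all four Penrose equations. *)
Lemma mpinv_exists (p q : nat) (A : 'M[C]_(p, q)) : exists X, is_mpinv A X.
Proof.
pose T := ctrmx A *m A *m ctrmx A; pose Y := pinvmx T.
have TYT : T *m Y *m T = T by apply: mulmxKpV; exact: submx_refl.
pose G := ctrmx A *m Y *m ctrmx A.
have AGA : A *m G *m A = A.
  have AGAAs : A *m (G *m A *m ctrmx A) = A *m ctrmx A.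
    by apply: ctrmx_mulmxKl; move: TYT; rewrite /T /G !mulmxA.
  have : A *m G *m A *m ctrmx A = 1%:M *m A *m ctrmx A.
    by rewrite mul1mx -AGAAs !mulmxA.
  by move/ctrmx_mulmxKr; rewrite mul1mx.
have AGs : ctrmx (A *m G) = A *m G.
  by apply: (selfadj_of_fix_l (Y := A *m ctrmx A *m Y)) AGA; rewrite /G !mulmxA.
have GAs : ctrmx (G *m A) = G *m A.
  apply: (selfadj_of_fix_r (Y := Y *m ctrmx A *m A)); first by rewrite /G !mulmxA.
  by rewrite mulmxA.
clearbody G; exists (G *m A *m G); split.
- by rewrite !mulmxA AGA AGA.
- have GAGA : G *m A *m G *m A = G *m A by rewrite -!mulmxA (mulmxA A G A) AGA.
  by rewrite !mulmxA !GAGA.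
- by rewrite !mulmxA AGA.
- by rewrite -!mulmxA (mulmxA A G A) AGA.
Qed.

Lemma mpinvP (p q : nat) (A : 'M[C]_(p, q)) : is_mpinv A (mpinv A).
Proof. exact: epsilon_spec (mpinv_exists A). Qed.

Lemma mulmx_ctrmx_ctrmx_mpinv (p q : nat) (A : 'M[C]_(p, q)) :
  A *m ctrmx A *m ctrmx (mpinv A) = A.
Proof.
by have [AXA _ _ XAs] := mpinvP A; rewrite -mulmxA -ctrmxM XAs mulmxA AXA.
Qed.

Lemma projP_mulmx (p q : nat) (A : 'M[C]_(p, q)) : projP A *m A = A.
Proof. by have [] := mpinvP A. Qed.

End MoorePenrose.

Section ColumnSpace.
Variable C : numClosedFieldType.

Lemma colsubP (p q r : nat) (A : 'M[C]_(p, q)) (B : 'M[C]_(p, r)) :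
  reflect (exists D, A = B *m D) (A^T <= B^T)%MS.
Proof.
apply: (iffP submxP) => [[D defA] | [D ->]].
  by exists D^T; rewrite -[A]trmxK defA trmx_mul trmxK.
by exists D^T; rewrite trmx_mul.
Qed.

Lemma colspace_eqP (p q r : nat) (A : 'M[C]_(p, q)) (B : 'M[C]_(p, r)) :
  colspace_eq A B <-> (exists D, A = B *m D) /\ (exists D, B = A *m D).
Proof.
split=> [/andP [/colsubP AB /colsubP BA] // | [/colsubP AB /colsubP BA]].
exact/andP.
Qed.

Lemma colspace_eq_sym (p q r : nat) (A : 'M[C]_(p, q)) (B : 'M[C]_(p, r)) :
  colspace_eq A B = colspace_eq B A.
Proof. exact: andbC. Qed.

Lemma colspace_eq_trans (p q r s : nat) (A : 'M[C]_(p, q)) (B : 'M[C]_(p, r))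
    (D : 'M[C]_(p, s)) :
  colspace_eq A B -> colspace_eq B D -> colspace_eq A D.
Proof. by move=> /eqmxP AB /eqmxP BD; apply/eqmxP; exact: eqmx_trans AB BD. Qed.

End ColumnSpace.

Section MatrixPowers.
Variables (R : pzSemiRingType) (n : nat) (A : 'M[R]_n).

Lemma exprSmx j : A ^+ j.+1 = A *m A ^+ j.
Proof. by rewrite exprS mulmxE. Qed.

Lemma exprSrmx j : A ^+ j.+1 = A ^+ j *m A.
Proof. by rewrite exprSr mulmxE. Qed.

Lemma exprDmx i j : A ^+ (i + j) = A ^+ i *m A ^+ j.
Proof. by rewrite exprD mulmxE. Qed.

Lemma expr2mx : A ^+ 2 = A *m A.
Proof. by rewrite expr2 mulmxE. Qed.

End MatrixPowers.

Section Index.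
Variables (C : numClosedFieldType) (n : nat) (A : 'M[C]_n).

(* Without a stabilising exponent, [rank (A^j) + j] would stay bounded by [n]. *)
Lemma mxindex_exists : exists k, index_prop A k.
Proof.
apply: NNPP => no_index.
have rank_pow j : (\rank (A ^+ j)^T + j <= n)%N.
  elim: j => [|j IHj]; first by rewrite expr0 trmx1 mxrank1 addn0.
  have sub : ((A ^+ j.+1)^T <= (A ^+ j)^T)%MS.
    by rewrite exprSrmx trmx_mul submxMl.
  have /negbTE neq : ~~ ((A ^+ j.+1)^T == (A ^+ j)^T)%MS.
    apply/negP => eqj; apply: no_index; exists j.
    by rewrite /index_prop colspace_eq_sym.
  have := ltn_leqif (mxrank_leqif_eq sub); rewrite neq => lt_rank.
  by rewrite addnS; apply: leq_trans IHj; rewrite ltn_add2r.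
by have := rank_pow n.+1; rewrite addnS ltnNge leq_addl.
Qed.

Lemma mxindexP : index_prop A (mxindex A).
Proof.
rewrite /mxindex; case: excluded_middle_informative => [ex | none].
  by case: ex_minnP.
by case: none; exact: mxindex_exists.
Qed.

Lemma mxindex_min j : index_prop A j -> (mxindex A <= j)%N.
Proof.
move=> idx_j; rewrite /mxindex; case: excluded_middle_informative => [ex | none].
  by case: ex_minnP => k _; apply.
by case: none; exists j.
Qed.

Lemma index_propD i j : index_prop A j -> index_prop A (i + j).
Proof.
case/colspace_eqP => [[W defAj] _]; apply/colspace_eqP; split.
  by exists W; rewrite exprDmx defAj mulmxA -exprDmx addnS.
by exists A; rewrite exprSrmx.
Qed.

Lemma colspace_pow_mxindex l :
  (mxindex A <= l)%N -> colspace_eq (A ^+ l) (A ^+ mxindex A).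
Proof.
move/subnK <-; elim: (l - mxindex A)%N => [|i IHi].
  by rewrite /colspace_eq add0n submx_refl.
apply: colspace_eq_trans IHi; rewrite colspace_eq_sym addSn.
exact: index_propD mxindexP.
Qed.

Lemma mxindex_le1 Y : A = A ^+ 2 *m Y -> (mxindex A <= 1)%N.
Proof.
move=> defA; apply: mxindex_min; apply/colspace_eqP; rewrite expr1.
by split; [exists Y | exists A; rewrite expr2mx].
Qed.

Lemma mxindex_le1_of_range Y : A = A ^+ mxindex A *m Y -> (mxindex A <= 1)%N.
Proof.
move=> defA; rewrite leqNgt; apply/negP => lt1k.
suff : (mxindex A <= 1)%N by rewrite leqNgt lt1k.
apply: (mxindex_le1 (Y := A ^+ (mxindex A - 2) *m Y)).
by rewrite mulmxA -exprDmx subnKC.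
Qed.

End Index.

Section OrthogonalProjector.
Variable C : numClosedFieldType.

Definition is_orthoproj (n p : nat) (E : 'M[C]_n) (K : 'M[C]_(n, p)) :=
  [/\ ctrmx E = E, E *m K = K & exists Z, E = K *m Z].

Lemma orthoproj_uniq (n p : nat) (E F : 'M[C]_n) (K : 'M[C]_(n, p)) :
  is_orthoproj E K -> is_orthoproj F K -> E = F.
Proof.
move=> [Es EK [Z defE]] [Fs FK [Z' defF]].
have FE : F *m E = E by rewrite defE mulmxA FK.
have EF : E *m F = F by rewrite defF mulmxA EK.
by rewrite -Es -FE ctrmxM Es Fs EF.
Qed.

Lemma orthoproj_colspace (n p q : nat) (E : 'M[C]_n) (K : 'M[C]_(n, p))
    (L : 'M[C]_(n, q)) :
  is_orthoproj E K -> colspace_eq K L -> is_orthoproj E L.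
Proof.
move=> [Es EK [Z defE]] /colspace_eqP [[U defK] [V defL]]; split => //.
  by rewrite defL mulmxA EK.
by exists (U *m Z); rewrite mulmxA -defK.
Qed.

Lemma projP_orthoproj (n p : nat) (K : 'M[C]_(n, p)) : is_orthoproj (projP K) K.
Proof. by have [KXK _ KXs _] := mpinvP K; split => //; exists (mpinv K). Qed.

End OrthogonalProjector.

Section CoreEP.
Variables (C : numClosedFieldType) (n : nat) (A : 'M[C]_n).
Local Notation k := (mxindex A).

(* The core-EP inverse is [A^k (A^(k+1))^dagger]. *)
Lemma coreEP_exists : exists X, is_coreEP A X.
Proof.
set K := A ^+ k; set B := A ^+ k.+1; set Bd := mpinv B.
have AK : A *m K = B by rewrite /B exprSmx.
have KA : K *m A = B by rewrite /B exprSrmx.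
have [[W KW] _] := (colspace_eqP _ _).1 (mxindexP A).
have [Z KZ] : exists Z, K = Z *m B.
  have BK : (B <= K)%MS by rewrite -AK submxMl.
  have rankKB : (\rank K <= \rank B)%N.
    by rewrite -(mxrank_tr K) -(mxrank_tr B) mxrankS //; apply/colsubP; exists W.
  have /andP [_ /submxP [D defK]] : (B == K)%MS.
    by rewrite -(mxrank_leqif_eq BK) eqn_leq mxrankS.
  by exists D.
have [BBdB _ BBds _] := mpinvP B.
have KBdB : K *m Bd *m B = K by rewrite {1}KZ -!mulmxA (mulmxA B) BBdB -KZ.
have AX : A *m (K *m Bd) = B *m Bd by rewrite mulmxA AK.
have XAX : K *m Bd *m A *m (K *m Bd) = K *m Bd.
  by rewrite -mulmxA AX mulmxA KBdB.
exists (K *m Bd); split => //.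
- by apply/colspace_eqP; split; [exists Bd | exists B].
apply/colspace_eqP; split.
- exists (A *m Bd *m ctrmx (K *m Bd)).
  rewrite -{1}XAX -mulmxA AX [ctrmx (_ *m (B *m Bd))]ctrmxM BBds -{1}KA.
  by rewrite !mulmxA.
- exists (ctrmx A *m K).
  by rewrite mulmxA -ctrmxM AX BBds /K KW mulmxA BBdB.
Qed.

Lemma coreEPP : is_coreEP A (coreEP A).
Proof. exact: epsilon_spec coreEP_exists. Qed.

Local Notation X := (coreEP A).

Lemma coreEP_range : exists U, X = A ^+ k *m U.
Proof. by have [_ /colspace_eqP [] ] := coreEPP. Qed.

Lemma coreEP_mul_pow l : (k <= l)%N -> X *m A ^+ l.+1 = A ^+ l.
Proof.
have [XAX /colspace_eqP [_ [V KV]] _] := coreEPP.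
have XAk1 : X *m A ^+ k.+1 = A ^+ k by rewrite exprSmx mulmxA {1}KV mulmxA XAX -KV.
by move/subnK <-; rewrite addnC -addSn !exprDmx mulmxA XAk1.
Qed.

Lemma coreEP_exp_mul_pow j i : (k <= i)%N -> X ^+ j *m A ^+ (j + i) = A ^+ i.
Proof.
elim: j i => [|j IHj] i le_ki; first by rewrite expr0 mul1mx.
rewrite exprSrmx -mulmxA addSn coreEP_mul_pow ?IHj //.
exact: leq_trans le_ki (leq_addl _ _).
Qed.

Lemma orthoproj_mulmx_coreEP : is_orthoproj (A *m X) (A ^+ k).
Proof.
have [_ _ /colspace_eqP [[U' XsU'] _]] := coreEPP.
have [[W KW] _] := (colspace_eqP _ _).1 (mxindexP A).
have [U XU] := coreEP_range.
have AXK : A *m X *m A ^+ k = A ^+ k.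
  by rewrite {1}KW mulmxA -(mulmxA A) coreEP_mul_pow // -exprSmx -KW.
split => //.
- apply: (selfadj_of_fix_l (Y := A *m ctrmx U')) AXK.
  by rewrite -{1}(ctrmxK X) XsU' ctrmxM mulmxA.
- by exists (A *m U); rewrite XU mulmxA -exprSmx exprSrmx mulmxA.
Qed.

End CoreEP.

Section WeakCoreInverse.
Variables (C : numClosedFieldType) (n : nat) (A : 'M[C]_n) (m : nat).
Hypothesis m_gt0 : (0 < m)%N.
Local Notation k := (mxindex A).
Local Notation X := (coreEP A).

Lemma mWC_range : exists Y, mWC A m = A ^+ k *m Y.
Proof.
have [U XU] := coreEP_range A.
exists (U *m X ^+ m *m A ^+ m *m projP (A ^+ m)).
by rewrite /mWC /mWG exprSmx XU !mulmxA.
Qed.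

Lemma mWC_mul_pow i : (k <= i)%N -> mWC A m *m A ^+ (m + i) = A ^+ (m.-1 + i).
Proof.
move=> le_ki; have le_k : (k <= m.-1 + i)%N by exact: leq_trans le_ki (leq_addl _ _).
rewrite -(coreEP_exp_mul_pow m.+1 le_k) /mWC /mWG exprDmx mulmxA.
rewrite -(mulmxA _ (projP _)) projP_mulmx -!mulmxA -!exprDmx.
by rewrite addSn -addnS -addSn prednK.
Qed.

Section IndexAtMostOne.
Hypothesis index_le1 : (k <= 1)%N.

Lemma colspace_pow_index_le1 j : (0 < j)%N -> colspace_eq (A ^+ j) A.
Proof.
move=> j_gt0; rewrite -{2}(expr1 A).
apply: colspace_eq_trans (colspace_pow_mxindex (leq_trans index_le1 j_gt0)) _.
by rewrite colspace_eq_sym colspace_pow_mxindex.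
Qed.

Lemma mulmx_coreEP_index_le1 : A *m X = projP A.
Proof.
apply: orthoproj_uniq (projP_orthoproj A).
apply: orthoproj_colspace (orthoproj_mulmx_coreEP A) _.
by rewrite colspace_eq_sym -{1}(expr1 A) colspace_pow_mxindex.
Qed.

Lemma projP_pow_index_le1 : projP (A ^+ m) = projP A.
Proof.
apply: orthoproj_uniq (projP_orthoproj A).
exact: orthoproj_colspace (projP_orthoproj _) (colspace_pow_index_le1 m_gt0).
Qed.

Lemma coreEP_mul_sqr_index_le1 : X *m A ^+ 2 = A.
Proof. by rewrite coreEP_mul_pow // expr1. Qed.

Lemma mWC_index_le1 : mWC A m = X.
Proof.
have [XAX _ _] := coreEPP A.
rewrite /mWC /mWG projP_pow_index_le1 -mulmx_coreEP_index_le1.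
rewrite mulmxA -(mulmxA _ _ A) -exprSrmx exprSmx -(mulmxA X).
by rewrite -(addn1 m) coreEP_exp_mul_pow // expr1.
Qed.

End IndexAtMostOne.

Lemma mWC_eq0 : mWC A m = 0 <-> A ^+ k = 0.
Proof.
split => [WC0 | Ak0].
  have [_ [D AkD]] := (colspace_eqP _ _).1 (colspace_pow_mxindex (leq_addl m.-1 k)).
  by rewrite AkD -mWC_mul_pow // WC0 !mul0mx.
by have [U XU] := coreEP_range A; rewrite /mWC /mWG exprSmx XU Ak0 !mul0mx.
Qed.

Lemma mWC_eq_id : mWC A m = A <-> is_EP A /\ tripotent A.
Proof.
have [XAX XK XsK] := coreEPP A.
split => [WCA | [EP A3]].
  have [Y AY] := mWC_range; rewrite WCA in AY.
  rewrite mWC_index_le1 ?(mxindex_le1_of_range AY) // in WCA.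
  split; first by rewrite /is_EP -WCA (colspace_eq_trans XK) // colspace_eq_sym.
  by move: XAX; rewrite WCA /tripotent exprSmx expr2mx mulmxA.
have le1 : (k <= 1)%N by apply: (mxindex_le1 (Y := A)); rewrite -exprSrmx A3.
rewrite mWC_index_le1 //.
have [_ [D AsD]] := (colspace_eqP _ _).1 EP.
have [Ps _ _] := projP_orthoproj A.
have PAs : projP A *m ctrmx A = ctrmx A by rewrite AsD mulmxA projP_mulmx.
have A2P : A ^+ 2 *m projP A = projP A by rewrite /projP mulmxA -exprSrmx A3.
have AsAs : ctrmx A *m ctrmx A = projP A.
  by move: (congr1 (@ctrmx _ _ _) A2P); rewrite ctrmxM Ps expr2mx ctrmxM mulmxA PAs.
have PAA : projP A = A *m A by rewrite -Ps -AsAs ctrmxM ctrmxK.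
rewrite -{1}XAX -mulmxA mulmx_coreEP_index_le1 // PAA -expr2mx.
exact: coreEP_mul_sqr_index_le1.
Qed.

Lemma mWC_eq_ctrmx : mWC A m = ctrmx A <-> is_EP A /\ partial_isometry A.
Proof.
have [XAX XK XsK] := coreEPP A.
split => [WCAs | [EP PI]].
  have [Y AsY] := mWC_range; rewrite WCAs in AsY.
  have le1 : (k <= 1)%N.
    apply: (mxindex_le1_of_range (Y := A *m Y *m ctrmx (mpinv A))).
    by rewrite -{1}(mulmx_ctrmx_ctrmx_mpinv A) AsY !mulmxA -exprSmx exprSrmx.
  rewrite mWC_index_le1 // in WCAs.
  split.
    rewrite /is_EP -[A in colspace_eq A _]ctrmxK -WCAs.
    by rewrite (colspace_eq_trans XsK) // colspace_eq_sym.
  by move: (congr1 (@ctrmx _ _ _) XAX); rewrite WCAs !ctrmxM ctrmxK mulmxA.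
have [_ [D AsD]] := (colspace_eqP _ _).1 EP.
have le1 : (k <= 1)%N.
  by apply: (mxindex_le1 (Y := D *m A)); rewrite -{1}PI AsD expr2mx !mulmxA.
rewrite mWC_index_le1 //.
have AAsP : A *m ctrmx A = projP A.
  apply: orthoproj_uniq (projP_orthoproj A); split => //.
  - by rewrite ctrmxM ctrmxK.
  - by exists (ctrmx A).
rewrite -{1}XAX -mulmxA mulmx_coreEP_index_le1 // -AAsP mulmxA {1}AsD mulmxA.
by rewrite -(mulmxA X) -expr2mx coreEP_mul_sqr_index_le1.
Qed.

Lemma mWC_eq_projP : mWC A m = projP A <-> idempotent_mx A.
Proof.
have [XAX _ _] := coreEPP A.
split => [WCP | AA].
  have [Y PY] := mWC_range; rewrite WCP in PY.
  have le1 : (k <= 1)%N.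
    apply: (mxindex_le1_of_range (Y := Y *m A)).
    by rewrite -{1}(projP_mulmx A) PY mulmxA.
  rewrite mWC_index_le1 // -mulmx_coreEP_index_le1 // in WCP.
  rewrite /idempotent_mx -{2}coreEP_mul_sqr_index_le1 // mulmxA -WCP.
  exact: coreEP_mul_sqr_index_le1.
have A2 : A ^+ 2 = A by rewrite expr2mx AA.
have le1 : (k <= 1)%N by apply: (mxindex_le1 (Y := 1%:M)); rewrite A2 mulmx1.
have XA : X *m A = A by rewrite -[A in _ *m A]A2 coreEP_mul_sqr_index_le1.
by rewrite mWC_index_le1 // -mulmx_coreEP_index_le1 // -{1}XAX XA.
Qed.

End WeakCoreInverse.

Theorem theorem7p2 (C : numClosedFieldType) (n : nat) (A : 'M[C]_n) (m : nat)
  (hm : (0 < m)%N) :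
  let k := mxindex A in
  [/\ mWC A m = 0 <-> A ^+ k = 0,
      mWC A m = A <-> is_EP A /\ tripotent A,
      mWC A m = ctrmx A <-> is_EP A /\ partial_isometry A
    & mWC A m = projP A <-> idempotent_mx A].
Proof.
split; [exact: mWC_eq0 | exact: mWC_eq_id | exact: mWC_eq_ctrmx | ].
exact: mWC_eq_projP.
Qed.
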